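(* For all $m\ge1$, $\bar\delta_{2m,1}=\frac{m}{2(2m-1)}$ and $\bar\delta_{2m+1,1}=\frac{m+1}{2(2m+1)}$.
   Context: For integers $\lambda\ge0$, $d\ge1$, write $\lambda=\sum_{i=1}^d\binom{k_i}{i}$ uniquely with $k_d>\cdots>k_1\ge0$ and set $\lambda^{[d]}=\sum_{i=1}^d\binom{k_i}{i+1}$. For $n>d$ and $0\le\lambda\le\binom nd$ let $\delta_{n,d}(\lambda)=\lambda/\binom nd-\lambda^{[d]}/\binom n{d+1}$, and let $\bar\delta_{n,d}=\max_{0\le\lambda\le\binom nd}\delta_{n,d}(\lambda)$ (the paper denotes this maximum simply by $\delta_{n,d}$ in this part). *)

From mathcomp Require Import all_boot all_order all_algebra.
Set Implicit Arguments. Unset Strict Implicit. Unset Printing Implicit Defensive.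
Import Order.TTheory GRing.Theory Num.Theory.

(* d-cascade representation of lam: lam = sum_{i=1}^d 'C(k i, i)
   with k d > k (d-1) > ... > k 1 >= 0.  Only k 1, ..., k d matter. *)
Definition cascade (d lam : nat) (k : nat -> nat) : Prop :=
  (forall i, 1 <= i < d -> k i < k i.+1) /\
  lam = \sum_(1 <= i < d.+1) 'C(k i, i).

Definition upper_shadow (d : nat) (k : nat -> nat) : nat :=
  \sum_(1 <= i < d.+1) 'C(k i, i.+1).

Local Open Scope ring_scope.

Definition delta (n d lam : nat) (k : nat -> nat) : rat :=
  lam%:R / ('C(n, d))%:R - (upper_shadow d k)%:R / ('C(n, d.+1))%:R.

Definition is_delta_bar (n d : nat) (x : rat) : Prop :=
  (exists lam k, (lam <= 'C(n, d))%N /\ cascade d lam k /\ delta n d lam k = x) /\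
  (forall lam k, (lam <= 'C(n, d))%N -> cascade d lam k -> delta n d lam k <= x).

From mathcomp Require Import all_boot all_order all_algebra.
From mathcomp Require Import ring lra zify.
Import Order.TTheory GRing.Theory Num.Theory.
Local Open Scope ring_scope.

(* For d = 1 the cascade of lam is just k 1 = lam and lam^[1] = C(lam, 2), so
   delta_{n,1}(lam) = lam (n - lam) / (n (n - 1)).  The integer lam maximising
   the quadratic lam (n - lam) is floor(n / 2), with value m^2 for n = 2m and
   m (m + 1) for n = 2m + 1. *)

Lemma cascade1E (lam : nat) (k : nat -> nat) : cascade 1 lam k <-> k 1%N = lam.
Proof.
rewrite /cascade big_nat1 bin1; split=> [[_ ->] // | <-].
by split=> // i /andP[i_ge1 i_lt1]; lia.
Qed.

Lemma natr_bin2 (R : pzRingType) (n : nat) :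
  ('C(n, 2))%:R * 2 = n%:R * (n%:R - 1) :> R.
Proof.
case: n => [|n]; first by rewrite bin0n mul0r mul0r.
have := bin_ffact n.+1 2; rewrite ffactnSr ffactn1 subSS subn0.
move=> /(congr1 (GRing.natmul (1 : R))).
by rewrite !natrM -addn1 natrD addrK.
Qed.

Lemma delta1E {n lam : nat} {k : nat -> nat} : (2 <= n)%N -> cascade 1 lam k ->
  delta n 1 lam k = lam%:R * (n%:R - lam%:R) / (n%:R * (n%:R - 1)).
Proof.
move=> n_ge2 /cascade1E k1; rewrite /delta /upper_shadow big_nat1 k1 bin1.
have n2 : 2 <= n%:R :> rat by rewrite (ler_nat _ 2).
have -> : ('C(lam, 2))%:R = lam%:R * (lam%:R - 1) / 2 :> rat.
  by rewrite -natr_bin2 mulfK.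
have -> : ('C(n, 2))%:R = n%:R * (n%:R - 1) / 2 :> rat.
  by rewrite -natr_bin2 mulfK.
by field; apply/andP; split; apply/eqP; lra.
Qed.

Lemma is_delta_bar1 (n lam0 : nat) : (2 <= n)%N -> (lam0 <= n)%N ->
  (forall lam : nat, lam%:R * (n%:R - lam%:R) <= lam0%:R * (n%:R - lam0%:R) :> rat) ->
  is_delta_bar n 1 (lam0%:R * (n%:R - lam0%:R) / (n%:R * (n%:R - 1))).
Proof.
move=> n_ge2 lam0_le lam0_max; rewrite /is_delta_bar bin1.
have n2 : 2 <= n%:R :> rat by rewrite (ler_nat _ 2).
split.
  have lam0_cascade : cascade 1 lam0 (fun=> lam0) by exact/cascade1E.
  by exists lam0, (fun=> lam0); rewrite (delta1E n_ge2 lam0_cascade).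
move=> lam k _ /(delta1E n_ge2) ->.
by rewrite ler_pM2r ?invr_gt0 ?lam0_max //; nra.
Qed.

Lemma mul_sub_le_even (m lam : nat) :
  lam%:R * (2 * m%:R - lam%:R) <= m%:R * (2 * m%:R - m%:R) :> rat.
Proof. by have := sqr_ge0 (lam%:R - m%:R : rat); nra. Qed.

(* lam (2m + 1 - lam) <= m (m + 1) because no integer lies strictly between m and m + 1. *)
Lemma mul_sub_le_odd (m lam : nat) :
  lam%:R * (2 * m%:R + 1 - lam%:R) <= m%:R * (2 * m%:R + 1 - m%:R) :> rat.
Proof.
have [lam_le | lam_gt] := leqP lam m.
  have : lam%:R <= m%:R :> rat by rewrite ler_nat.
  have : 0 <= lam%:R :> rat by [].
  nra.
have : m%:R + 1 <= lam%:R :> rat by rewrite natr1 ler_nat.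
nra.
Qed.

Theorem proposition6p1 (m : nat) (hm : (1 <= m)%N) :
  is_delta_bar (2 * m) 1 (m%:R / (2 * (2 * m%:R - 1))) /\
  is_delta_bar (2 * m + 1) 1 ((m%:R + 1) / (2 * (2 * m%:R + 1))).
Proof.
have m1 : 1 <= m%:R :> rat by rewrite (ler_nat _ 1).
split.
  have := @is_delta_bar1 (2 * m) m; rewrite natrM.
  have -> : m%:R * (2 * m%:R - m%:R) / (2 * m%:R * (2 * m%:R - 1))
            = m%:R / (2 * (2 * m%:R - 1)) :> rat by field; lra.
  apply; [lia | lia | exact: mul_sub_le_even].
have := @is_delta_bar1 (2 * m + 1) m; rewrite natrD natrM.
have -> : m%:R * (2 * m%:R + 1 - m%:R) / ((2 * m%:R + 1) * (2 * m%:R + 1 - 1))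
          = (m%:R + 1) / (2 * (2 * m%:R + 1)) :> rat by field; lra.
apply; [lia | lia | exact: mul_sub_le_odd].
Qed.
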